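(* Let $(R,I)$ be a bounded prism and $f:(A,J)\to(A',J')$ a morphism of $\delta$-pairs over $(R,I)$ such that $A/(pR+I)^nA\to A'/(pR+I)^nA'$ is étale for every $n\ge1$ and $f$ induces an isomorphism $A/J\xrightarrow{\sim}A'/J'$. Then $(A,J)$ has a bounded prismatic envelope $(D,ID)$ over $(R,I)$ if and only if $(A',J')$ has a bounded prismatic envelope $(D',ID')$ over $(R,I)$; when these hold, the morphism $(D,ID)\to(D',ID')$ induced by $f$ is an isomorphism.
   Context: $p$ a fixed prime; $\delta$-rings: $\delta(0)=\delta(1)=0$, $\delta(x+y)=\delta(x)+\delta(y)-\sum_{i=1}^{p-1}\frac1p\binom pi x^iy^{p-i}$, $\delta(xy)=\delta(x)y^p+x^p\delta(y)+p\delta(x)\delta(y)$, $\varphi(x)=x^p+p\delta(x)$. A $\delta$-pair is a $\delta$-ring with an ideal; a morphism of $\delta$-pairs $(A,J)\to(B,K)$ is a $\delta$-homomorphism with $J\mapsto K$. A bounded prism is a $\delta$-pair $(R,I)$ with $I$ invertible, $R$ $(pR+I)$-adically complete and separated, $p\in I+\varphi(I)R$, $(R/I)[p^\infty]=(R/I)[p^N]$ for some $N$. A $\delta$-pair over $(R,I)$ is one equipped with a morphism from $(R,I)$; a bounded prism over $(R,I)$ is a bounded prism $(B,IB)$ with such a morphism. A bounded prismatic envelope of $(A,J)$ over $(R,I)$ is a bounded prism $(D,ID)$ over $(R,I)$ with a morphism of $\delta$-pairs $g:(A,J)\to(D,ID)$ over $(R,I)$ such that every morphism of $\delta$-pairs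 $h:(A,J)\to(B,IB)$ over $(R,I)$ to a bounded prism over $(R,I)$ factors as $h=k\circ g$ for a unique morphism $k$ of bounded prisms over $(R,I)$. *)

From HB Require Import structures.
From mathcomp Require Import all_boot all_order all_algebra.

Set Implicit Arguments.
Unset Strict Implicit.
Unset Printing Implicit Defensive.

Import Order.TTheory GRing.Theory Num.Theory.
Local Open Scope ring_scope.

(* Ideals, represented as Prop-valued predicates on a commutative ring *)
(* (zero rings are allowed: we use comPzRingType throughout).          *)

Definition ideal_of (A : comPzRingType) (J : A -> Prop) : Prop :=
  [/\ J 0, (forall x y, J x -> J y -> J (x + y)) & (forall a x, J x -> J (a * x))].

Definition ideal_gen (A : comPzRingType) (S : A -> Prop) : A -> Prop :=
  fun x => exists (n : nat) (r s : 'I_n -> A),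
    (forall i, S (s i)) /\ x = \sum_(i < n) r i * s i.

Definition ext_ideal (A B : comPzRingType) (g : A -> B) (J : A -> Prop) : B -> Prop :=
  ideal_gen (fun y => exists x, J x /\ y = g x).

Definition ideal_add (A : comPzRingType) (J K : A -> Prop) : A -> Prop :=
  fun x => exists y z, J y /\ K z /\ x = y + z.

Definition pideal (p : nat) (A : comPzRingType) : A -> Prop :=
  fun x => exists r, x = p%:R * r.
Arguments pideal p A : clear implicits.

Definition idpow (A : comPzRingType) (J : A -> Prop) (n : nat) : A -> Prop :=
  ideal_gen (fun y => exists t : 'I_n -> A, (forall i, J (t i)) /\ y = \prod_(i < n) t i).

(* A is J-adically complete and separated: A -> lim A/J^n is bijective. *)
Definition adic_complete (A : comPzRingType) (J : A -> Prop) : Prop :=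
  (forall x : A, (forall n, idpow J n x) -> x = 0) /\
  (forall u : nat -> A, (forall n, idpow J n (u n.+1 - u n)) ->
     exists x : A, forall n, idpow J n (x - u n)).

(* Invertible ideal (= defines an effective Cartier divisor): there is a
   cover of Spec A by D(s_i) such that on each D(s_i) the ideal is generated
   by a nonzerodivisor d_i; written out elementwise for the localizations. *)
Definition invertible_ideal (A : comPzRingType) (K : A -> Prop) : Prop :=
  exists (n : nat) (s d c : 'I_n -> A),
    \sum_(i < n) c i * s i = 1 /\
    forall i, [/\ K (d i),
      (forall x, K x -> exists (k : nat) (y : A), s i ^+ k * x = d i * y) &
      (forall y, d i * y = 0 -> exists k : nat, s i ^+ k * y = 0)].

Definition is_delta (p : nat) (A : comPzRingType) (d : A -> A) : Prop :=
  [/\ d 0 = 0, d 1 = 0,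
    (forall x y, d (x + y) = d x + d y
        - \sum_(1 <= i < p) ('C(p, i) %/ p)%:R * x ^+ i * y ^+ (p - i)) &
    (forall x y, d (x * y) = d x * y ^+ p + x ^+ p * d y + p%:R * d x * d y)].

Definition frob (p : nat) (A : comPzRingType) (d : A -> A) (x : A) : A :=
  x ^+ p + p%:R * d x.

Definition delta_hom (A B : comPzRingType) (dA : A -> A) (dB : B -> B) (g : A -> B) : Prop :=
  forall x, g (dA x) = dB (g x).

Definition is_bounded_prism (p : nat) (B : comPzRingType) (dB : B -> B) (K : B -> Prop) : Prop :=
  [/\ is_delta p dB, ideal_of K, invertible_ideal K,
      adic_complete (ideal_add (pideal p B) K) &
      ideal_add K (ideal_gen (fun y => exists x, K x /\ y = frob p dB x)) (p%:R : B) /\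
      exists N : nat, forall (x : B) (k : nat),
        K ((p%:R : B) ^+ k * x) -> K ((p%:R : B) ^+ N * x)].

Definition dpair_over (p : nat) (R : comPzRingType) (dR : R -> R) (I : R -> Prop)
    (A : comPzRingType) (dA : A -> A) (sA : {rmorphism R -> A}) (J : A -> Prop) : Prop :=
  [/\ is_delta p dA, ideal_of J, delta_hom dR dA sA & forall x, I x -> J (sA x)].

Definition bprism_over (p : nat) (R : comPzRingType) (dR : R -> R) (I : R -> Prop)
    (B : comPzRingType) (dB : B -> B) (sB : {rmorphism R -> B}) : Prop :=
  [/\ is_delta p dB, delta_hom dR dB sB & is_bounded_prism p dB (ext_ideal sB I)].

Definition dmor_over (R A B : comPzRingType)
    (dA : A -> A) (sA : {rmorphism R -> A}) (J : A -> Prop)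
    (dB : B -> B) (sB : {rmorphism R -> B}) (K : B -> Prop)
    (h : {rmorphism A -> B}) : Prop :=
  [/\ delta_hom dA dB h, (forall x, J x -> K (h x)) & (forall r, h (sA r) = sB r)].

Definition is_envelope (p : nat) (R : comPzRingType) (dR : R -> R) (I : R -> Prop)
    (A : comPzRingType) (dA : A -> A) (sA : {rmorphism R -> A}) (J : A -> Prop)
    (D : comPzRingType) (dD : D -> D) (sD : {rmorphism R -> D})
    (g : {rmorphism A -> D}) : Prop :=
  [/\ bprism_over p dR I dD sD,
      dmor_over dA sA J dD sD (ext_ideal sD I) g &
      forall (B : comPzRingType) (dB : B -> B) (sB : {rmorphism R -> B}),
        bprism_over p dR I dB sB ->
        forall h : {rmorphism A -> B}, dmor_over dA sA J dB sB (ext_ideal sB I) h ->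
        (exists k : {rmorphism D -> B},
            dmor_over dD sD (ext_ideal sD I) dB sB (ext_ideal sB I) k /\
            forall x, h x = k (g x)) /\
        (forall k1 k2 : {rmorphism D -> B},
            dmor_over dD sD (ext_ideal sD I) dB sB (ext_ideal sB I) k1 ->
            (forall x, h x = k1 (g x)) ->
            dmor_over dD sD (ext_ideal sD I) dB sB (ext_ideal sB I) k2 ->
            (forall x, h x = k2 (g x)) ->
            forall y, k1 y = k2 y)].

Definition has_envelope (p : nat) (R : comPzRingType) (dR : R -> R) (I : R -> Prop)
    (A : comPzRingType) (dA : A -> A) (sA : {rmorphism R -> A}) (J : A -> Prop) : Prop :=
  exists (D : comPzRingType) (dD : D -> D) (sD : {rmorphism R -> D})
         (g : {rmorphism A -> D}), is_envelope p dR I dA sA J dD sD g.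

(* Etaleness of the induced map A/K -> A'/K' (for f : A -> A' with     *)
(* f(K) contained in K'), without forming quotient rings:              *)
(* etale := finitely presented + formally etale (EGA IV 17.3.1 /       *)
(* Stacks 00UR).                                                        *)

(* evaluation of a polynomial in A[x_0..x_{m-1}], given as a list of
   terms (coefficient, exponent vector), along u : A -> C at c *)
Definition poly_ev (A C : comPzRingType) (u : A -> C) (m : nat) (c : 'I_m -> C)
    (P : seq (A * ('I_m -> nat))) : C :=
  \sum_(t <- P) u t.1 * \prod_(i < m) c i ^+ t.2 i.

(* A'/K' is a finitely presented A/K-algebra: there are generators a and
   finitely many relations g in A[x] such that A'/K' represents the functor
   C |-> {A/K-algebra points c of C with g(c) = 0}, i.e.
   A'/K' ~= (A/K)[x_0..x_{m-1}]/(g_0,...,g_{k-1}). *)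
Definition fp_mod (A A' : comPzRingType) (f : {rmorphism A -> A'})
    (K : A -> Prop) (K' : A' -> Prop) : Prop :=
  exists (m : nat) (a : 'I_m -> A') (k : nat) (g : 'I_k -> seq (A * ('I_m -> nat))),
    (forall j, K' (poly_ev f a (g j))) /\
    forall (C : comPzRingType) (u : {rmorphism A -> C}) (c : 'I_m -> C),
      (forall x, K x -> u x = 0) -> (forall j, poly_ev u c (g j) = 0) ->
      (exists w : {rmorphism A' -> C},
          [/\ forall y, K' y -> w y = 0, forall x, w (f x) = u x & forall i, w (a i) = c i]) /\
      (forall w1 w2 : {rmorphism A' -> C},
          [/\ forall y, K' y -> w1 y = 0, forall x, w1 (f x) = u x & forall i, w1 (a i) = c i] ->
          [/\ forall y, K' y -> w2 y = 0, forall x, w2 (f x) = u x & forall i, w2 (a i) = c i] ->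
          forall y, w1 y = w2 y).

(* A/K -> A'/K' is formally etale: for every ring C with a square-zero ideal
   N, every ring map u : A/K -> C and every ring map v : A'/K' -> C/N
   compatible with u, there is a unique lift w : A'/K' -> C.  Maps into C/N
   are represented by functions A' -> C that are ring maps modulo N. *)
Definition formally_etale_mod (A A' : comPzRingType) (f : {rmorphism A -> A'})
    (K : A -> Prop) (K' : A' -> Prop) : Prop :=
  forall (C : comPzRingType) (N : C -> Prop),
    ideal_of N -> (forall x y, N x -> N y -> x * y = 0) ->
    forall (u : {rmorphism A -> C}) (v : A' -> C),
      (forall x, K x -> u x = 0) ->
      (forall y z, N (v (y + z) - (v y + v z))) ->
      (forall y z, N (v (y * z) - v y * v z)) ->
      N (v 1 - 1) ->
      (forall y, K' y -> N (v y)) ->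
      (forall x, N (v (f x) - u x)) ->
      (exists w : {rmorphism A' -> C},
          [/\ forall y, K' y -> w y = 0, forall x, w (f x) = u x & forall y, N (w y - v y)]) /\
      (forall w1 w2 : {rmorphism A' -> C},
          [/\ forall y, K' y -> w1 y = 0, forall x, w1 (f x) = u x & forall y, N (w1 y - v y)] ->
          [/\ forall y, K' y -> w2 y = 0, forall x, w2 (f x) = u x & forall y, N (w2 y - v y)] ->
          forall y, w1 y = w2 y).

Definition etale_mod (A A' : comPzRingType) (f : {rmorphism A -> A'})
    (K : A -> Prop) (K' : A' -> Prop) : Prop :=
  fp_mod f K K' /\ formally_etale_mod f K K'.

(* Since A/J = A'/J' and A -> A' is étale modulo every power of (p, I), a
   delta-map h : (A, J) -> (B, IB) into a bounded prism extends uniquely along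
   f.  Composing h with a set-theoretic section of A' -> A'/J' = A/J gives a
   ring map modulo IB; formal étaleness of A/(p,I)^n -> A'/(p,I)^n corrects it
   successively modulo (p, IB)^n, and the (p, IB)-adic limit is a ring map H
   with H o f = h.  H sends J' into IB because IB is (p, IB)-adically closed in
   a bounded prism, and H commutes with delta because y |-> (H y, H (delta y))
   and y |-> (H y, delta (H y)) are ring maps into the length-2 Witt vectors
   W_2(B) that agree on f(A), so they coincide by the uniqueness of étale
   lifts.  Hence (A, J) and (A', J') corepresent the same functor on bounded
   prisms over (R, I), which gives both claims. *)

From HB Require Import structures.
From mathcomp Require Import all_boot all_order all_algebra.
From mathcomp Require Import ring zify.
From Stdlib Require Import Lia ClassicalEpsilon FunctionalExtensionality PropExtensionality.
Import GRing.Theory.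
Local Open Scope ring_scope.
Set Implicit Arguments.
Unset Strict Implicit.
Unset Printing Implicit Defensive.

Section IdealTheory.
Variables (E : comPzRingType) (M : E -> Prop).
Hypothesis hM : ideal_of M.

Lemma ideal0 : M 0. Proof. by case: hM. Qed.
Lemma idealD x y : M x -> M y -> M (x + y). Proof. by case: hM => _ h _; apply: h. Qed.
Lemma idealMl a x : M x -> M (a * x). Proof. by case: hM => _ _ h; apply: h. Qed.
Lemma idealMr a x : M x -> M (x * a). Proof. by rewrite mulrC; apply: idealMl. Qed.
Lemma idealN x : M x -> M (- x). Proof. by move=> h; rewrite -mulN1r; apply: idealMl. Qed.
Lemma idealB x y : M x -> M y -> M (x - y).
Proof. by move=> hx hy; apply: idealD => //; apply: idealN. Qed.
Lemma idealBC x y : M (x - y) -> M (y - x). Proof. by move/idealN; rewrite opprB. Qed.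
Lemma idealX x n : (0 < n)%N -> M x -> M (x ^+ n).
Proof. by case: n => // n _ hx; rewrite exprSr; apply: idealMl. Qed.
Lemma idealB_trans x y z : M (x - y) -> M (y - z) -> M (x - z).
Proof. by move=> h1 h2; have := idealD h1 h2; rewrite addrA subrK. Qed.

End IdealTheory.

Lemma preim_ideal (X Y : comPzRingType) (phi : {rmorphism X -> Y}) (T : Y -> Prop) :
  ideal_of T -> ideal_of (fun x => T (phi x)).
Proof.
move=> hT; split.
- by rewrite rmorph0; apply: ideal0.
- by move=> x y hx hy; rewrite rmorphD; apply: idealD.
- by move=> a x hx; rewrite rmorphM; apply: idealMl.
Qed.

(** * Quotient rings *)

(* Quotients are taken by arbitrary Prop-valued ideals, possibly the whole
   ring, so the (proper, boolean) ideal quotients of ring_quotient do not apply;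
   elements are canonical representatives chosen by [epsilon]. *)
Definition repr_mod (E : comPzRingType) (M : E -> Prop) (x : E) : E :=
  epsilon (inhabits 0) (fun y => M (y - x)).

Section Representatives.
Variables (E : comPzRingType) (M : E -> Prop).
Hypothesis hM : ideal_of M.

Lemma repr_modP x : M (repr_mod M x - x).
Proof.
apply: (epsilon_spec (inhabits 0) (fun y => M (y - x))).
by exists x; rewrite subrr; apply: ideal0.
Qed.

Lemma repr_mod_eq x y : M (x - y) -> repr_mod M x = repr_mod M y.
Proof.
move=> h; rewrite /repr_mod; congr epsilon; apply: functional_extensionality => z.
apply: propositional_extensionality; split => hz.
- by move: (idealD hM hz h); rewrite addrA subrK.
- by move: (idealD hM hz (idealBC hM h)); rewrite addrA subrK.
Qed.

Lemma repr_mod_eqP x y : repr_mod M x = repr_mod M y -> M (x - y).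
Proof.
by move=> h; apply: (idealB_trans hM (idealBC hM (repr_modP x))); rewrite h; apply: repr_modP.
Qed.

Lemma repr_modK x : repr_mod M (repr_mod M x) = repr_mod M x.
Proof. exact: repr_mod_eq (repr_modP x). Qed.

End Representatives.

Definition quot (E : comPzRingType) (M : E -> Prop) (hM : ideal_of M) :=
  {x : E | repr_mod M x == x}.
HB.instance Definition _ E M hM := Choice.copy (@quot E M hM) {x : E | repr_mod M x == x}.

Section QuotientRing.
Variables (E : comPzRingType) (M : E -> Prop) (hM : ideal_of M).
Local Notation Q := (quot hM).

Definition qproj (x : E) : Q := exist _ (repr_mod M x) (introT eqP (repr_modK hM x)).
Definition qval (q : Q) : E := sval q.

Lemma qvalK q : qproj (qval q) = q.
Proof. by case: q => x hx; apply: val_inj => /=; apply/eqP. Qed.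
Lemma qvalP x : M (qval (qproj x) - x). Proof. exact: repr_modP. Qed.
Lemma qproj_eq x y : M (x - y) -> qproj x = qproj y.
Proof. by move=> h; apply: val_inj => /=; apply: repr_mod_eq. Qed.
Lemma qproj_eqP x y : qproj x = qproj y -> M (x - y).
Proof. by move=> h; apply: (repr_mod_eqP hM); move: (congr1 qval h). Qed.

Definition qadd (a b : Q) : Q := qproj (qval a + qval b).
Definition qopp (a : Q) : Q := qproj (- qval a).
Definition qmul (a b : Q) : Q := qproj (qval a * qval b).

Lemma qaddE x y : qadd (qproj x) (qproj y) = qproj (x + y).
Proof. by apply: qproj_eq; rewrite opprD addrACA; apply: (idealD hM); apply: qvalP. Qed.
Lemma qoppE x : qopp (qproj x) = qproj (- x).
Proof. by apply: qproj_eq; rewrite -opprD; apply: (idealN hM); apply: qvalP. Qed.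
Lemma qmulE x y : qmul (qproj x) (qproj y) = qproj (x * y).
Proof.
apply: qproj_eq.
have -> : qval (qproj x) * qval (qproj y) - x * y =
   (qval (qproj x) - x) * qval (qproj y) + x * (qval (qproj y) - y).
  by rewrite mulrBl mulrBr addrA subrK.
by apply: (idealD hM); [apply: (idealMr hM) | apply: (idealMl hM)]; apply: qvalP.
Qed.

Lemma qaddA : associative qadd.
Proof. by move=> a b c; rewrite -[a]qvalK -[b]qvalK -[c]qvalK !qaddE addrA. Qed.
Lemma qaddC : commutative qadd.
Proof. by move=> a b; rewrite -[a]qvalK -[b]qvalK !qaddE addrC. Qed.
Lemma qadd0 : left_id (qproj 0) qadd.
Proof. by move=> a; rewrite -[a]qvalK qaddE add0r. Qed.
Lemma qaddN : left_inverse (qproj 0) qopp qadd.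
Proof. by move=> a; rewrite -[a]qvalK qoppE qaddE addNr. Qed.
HB.instance Definition _ := GRing.isZmodule.Build Q qaddA qaddC qadd0 qaddN.

Lemma qmulA : associative qmul.
Proof. by move=> a b c; rewrite -[a]qvalK -[b]qvalK -[c]qvalK !qmulE mulrA. Qed.
Lemma qmulC : commutative qmul.
Proof. by move=> a b; rewrite -[a]qvalK -[b]qvalK !qmulE mulrC. Qed.
Lemma qmul1 : left_id (qproj 1) qmul.
Proof. by move=> a; rewrite -[a]qvalK qmulE mul1r. Qed.
Lemma qmulD : left_distributive qmul qadd.
Proof.
by move=> a b c; rewrite -[a]qvalK -[b]qvalK -[c]qvalK qaddE !qmulE qaddE mulrDl.
Qed.
HB.instance Definition _ := GRing.Zmodule_isComPzRing.Build Q qmulA qmulC qmul1 qmulD.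

End QuotientRing.

Definition mk_rmorph (X Y : comPzRingType) (w : X -> Y) (w0 : w 0 = 0)
  (wD : forall x y, w (x + y) = w x + w y) (w1 : w 1 = 1)
  (wM : forall x y, w (x * y) = w x * w y) : {rmorphism X -> Y} :=
  HB.pack w (GRing.isNmodMorphism.Build _ _ w (w0, wD))
            (GRing.isMonoidMorphism.Build _ _ w (w1, wM)).

Definition rmorph_mod (X E : comPzRingType) (M : E -> Prop) (w : X -> E) : Prop :=
  [/\ forall y z, M (w (y + z) - (w y + w z)),
      forall y z, M (w (y * z) - w y * w z) & M (w 1 - 1)].

Section RmorphMod.
Variables (X E : comPzRingType) (M : E -> Prop) (hM : ideal_of M).

Lemma rmorph_rmorph_mod (w : {rmorphism X -> E}) : rmorph_mod M w.
Proof. by split=> *; rewrite ?rmorphD ?rmorphM ?rmorph1 subrr; apply: ideal0. Qed.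

Variables (w : X -> E) (hw : rmorph_mod M w).

Lemma rmorph_modD y z : M (w (y + z) - (w y + w z)). Proof. by case: hw. Qed.
Lemma rmorph_modM y z : M (w (y * z) - w y * w z). Proof. by case: hw. Qed.
Lemma rmorph_mod1 : M (w 1 - 1). Proof. by case: hw. Qed.

Lemma rmorph_mod0 : M (w 0).
Proof.
have := rmorph_modD 0 0; rewrite addr0 opprD addrA subrr add0r.
by move/(idealN hM); rewrite opprK.
Qed.

Lemma rmorph_modB y z : M (w (y - z) - (w y - w z)).
Proof.
have hNz : M (w (- z) + w z).
  have := idealB hM rmorph_mod0 (rmorph_modD (- z) z).
  by rewrite addNr opprB addrC subrK.
have -> : w (y - z) - (w y - w z) = (w (y - z) - (w y + w (- z))) + (w (- z) + w z).
  by ring.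
by apply: (idealD hM) hNz; apply: rmorph_modD.
Qed.

Lemma rmorph_mod_sub (N : E -> Prop) : (forall x, M x -> N x) -> rmorph_mod N w.
Proof. by move=> hMN; split=> *; apply: hMN; case: hw. Qed.

End RmorphMod.

Section QuotientMaps.
Variables (E : comPzRingType) (M : E -> Prop) (hM : ideal_of M).
Local Notation Q := (quot hM).
Local Notation qproj := (qproj hM).

Lemma qprojD x y : qproj (x + y) = qproj x + qproj y. Proof. by rewrite -qaddE. Qed.
Lemma qprojM x y : qproj (x * y) = qproj x * qproj y. Proof. by rewrite -qmulE. Qed.
Definition qproj_rmorph : {rmorphism E -> Q} := mk_rmorph erefl qprojD erefl qprojM.

Lemma qprojB x y : qproj (x - y) = qproj x - qproj y.
Proof. exact: (rmorphB qproj_rmorph). Qed.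

Lemma qproj_eq0 x : qproj x = 0 <-> M x.
Proof.
split=> h; last by apply: qproj_eq; rewrite subr0.
by have := qproj_eqP (h : qproj x = qproj 0); rewrite subr0.
Qed.

Lemma qval_rmorph_mod : rmorph_mod M (@qval _ _ hM).
Proof. by split=> *; apply: qvalP. Qed.

Section Lift.
Variables (X : comPzRingType) (w : X -> E) (hw : rmorph_mod M w).

Lemma qlift0 : qproj (w 0) = 0. Proof. exact/qproj_eq0/(rmorph_mod0 hM hw). Qed.
Lemma qliftD y z : qproj (w (y + z)) = qproj (w y) + qproj (w z).
Proof. by rewrite -qprojD; apply: qproj_eq; apply: rmorph_modD hw _ _. Qed.
Lemma qlift1 : qproj (w 1) = 1. Proof. by apply: qproj_eq; apply: rmorph_mod1 hw. Qed.
Lemma qliftM y z : qproj (w (y * z)) = qproj (w y) * qproj (w z).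
Proof. by rewrite -qprojM; apply: qproj_eq; apply: rmorph_modM hw _ _. Qed.

Definition qlift : {rmorphism X -> Q} := mk_rmorph qlift0 qliftD qlift1 qliftM.
Lemma qliftE y : qlift y = qproj (w y). Proof. by []. Qed.

End Lift.

Variable N : E -> Prop.
Hypotheses (hN : ideal_of N) (hMN : forall x, M x -> N x)
  (hNN : forall x y, N x -> N y -> M (x * y)).

Definition qideal : Q -> Prop := fun q => N (qval q).

Lemma qideal_proj x : qideal (qproj x) <-> N x.
Proof.
have hx := hMN (qvalP hM x); rewrite /qideal; split=> h.
- by have := idealB hN h hx; rewrite opprB addrC subrK.
- by have := idealD hN h hx; rewrite addrC subrK.
Qed.

Lemma qideal_ideal : ideal_of qideal.
Proof.
have hq := qval_rmorph_mod; split.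
- exact/hMN/(rmorph_mod0 hM hq).
- move=> a b ha hb; rewrite /qideal.
  by have := idealD hN (hMN (rmorph_modD hq a b)) (idealD hN ha hb); rewrite subrK.
- move=> a b hb; rewrite /qideal.
  by have := idealD hN (hMN (rmorph_modM hq a b)) (idealMl hN (qval a) hb); rewrite subrK.
Qed.

Lemma qideal_mul0 a b : qideal a -> qideal b -> a * b = 0.
Proof. by move=> ha hb; rewrite -[a]qvalK -[b]qvalK -qprojM; apply/qproj_eq0/hNN. Qed.

End QuotientMaps.

(** * Formal étaleness against ring maps modulo an ideal *)

Section FormalEtale.
Variables (A A' : comPzRingType) (f : {rmorphism A -> A'}) (K : A -> Prop) (K' : A' -> Prop).
Hypothesis hfe : formally_etale_mod f K K'.

Lemma formally_etale_mod_eq (hKK : forall x, K x -> K' (f x))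
  (C : comPzRingType) (N : C -> Prop) (hN : ideal_of N)
  (hNN : forall x y, N x -> N y -> x * y = 0) (w1 w2 : {rmorphism A' -> C}) :
  (forall y, K' y -> w1 y = 0) -> (forall y, K' y -> w2 y = 0) ->
  (forall x, w1 (f x) = w2 (f x)) -> (forall y, N (w1 y - w2 y)) ->
  forall y, w1 y = w2 y.
Proof.
move=> k1 k2 hf hd.
have hN0 := ideal0 hN; have sub0 := fun y : C => subrr y.
have [|||||| _ huniq] := hfe hN hNN (u := (w1 \o f)%FUN) (v := w1).
- by move=> x /hKK /k1.
- by move=> y z; rewrite rmorphD sub0.
- by move=> y z; rewrite rmorphM sub0.
- by rewrite rmorph1 sub0.
- by move=> y /k1 ->.
- by move=> x; rewrite sub0.
apply: huniq; first by split=> // y; rewrite sub0.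
by split=> // [x | y]; [rewrite /= hf | apply/(idealBC hN)/hd].
Qed.

Variables (E : comPzRingType) (M N : E -> Prop).
Hypotheses (hM : ideal_of M) (hN : ideal_of N) (hMN : forall x, M x -> N x)
  (hNN : forall x y, N x -> N y -> M (x * y)).

(* Both lemmas apply formal étaleness in [E/M], where [N] becomes square-zero. *)
Lemma formally_etale_mod_uniq (hKK : forall x, K x -> K' (f x))
  (w1 w2 : A' -> E) (r1 : rmorph_mod M w1) (r2 : rmorph_mod M w2) :
  (forall y, K' y -> M (w1 y)) -> (forall y, K' y -> M (w2 y)) ->
  (forall x, M (w1 (f x) - w2 (f x))) -> (forall y, N (w1 y - w2 y)) ->
  forall y, M (w1 y - w2 y).
Proof.
move=> k1 k2 hf hd y; apply: (qproj_eqP (hM := hM)).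
suff e : forall z, qlift hM r1 z = qlift hM r2 z by exact: e y.
apply: (formally_etale_mod_eq hKK (qideal_ideal hM hN hMN) (qideal_mul0 hNN))
  => [z /k1 | z /k2 | x | z]; rewrite ?qliftE /=.
- by move=> h; apply/qproj_eq0.
- by move=> h; apply/qproj_eq0.
- exact/qproj_eq.
- by rewrite -qprojB; apply/(qideal_proj hM hN hMN).
Qed.

Lemma formally_etale_mod_lift (u : A -> E) (ru : rmorph_mod M u)
  (ku : forall x, K x -> M (u x)) (v : A' -> E) (rv : rmorph_mod N v)
  (kv : forall y, K' y -> N (v y)) (hvu : forall x, N (v (f x) - u x)) :
  exists w : A' -> E, [/\ rmorph_mod M w, (forall y, K' y -> M (w y)),
    (forall x, M (w (f x) - u x)) & (forall y, N (w y - v y))].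
Proof.
have hNQ := qideal_ideal hM hN hMN.
have NQ_proj := qideal_proj hM hN hMN.
pose V y := qproj hM (v y).
have [|||||| [W [Wk Wf WN]] _] := hfe hNQ (qideal_mul0 hNN) (u := qlift hM ru) (v := V).
- by move=> x /ku hx; rewrite qliftE; apply/qproj_eq0.
- by move=> y z; rewrite /V -(qprojD hM (v y)) -qprojB; apply/NQ_proj/(rmorph_modD rv).
- by move=> y z; rewrite /V -(qprojM hM (v y)) -qprojB; apply/NQ_proj/(rmorph_modM rv).
- by rewrite /V -qprojB; apply/NQ_proj/(rmorph_mod1 rv).
- by move=> y /kv /NQ_proj.
- by move=> x; rewrite qliftE /V -qprojB; apply/NQ_proj/hvu.
have hq := qval_rmorph_mod hM.
exists (fun y => qval (W y)); split.
- by split=> [y z | y z |]; rewrite ?rmorphD ?rmorphM ?rmorph1; case: hq.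
- by move=> y /Wk ->; apply: (rmorph_mod0 hM hq).
- by move=> x; rewrite Wf qliftE; apply: qvalP.
- move=> y; have := WN y; rewrite /qideal => hWV.
  have -> : qval (W y) - v y = qval (W y - V y)
      - (qval (W y - V y) - (qval (W y) - qval (V y))) + (qval (V y) - v y) by ring.
  apply: (idealD hN); last by apply: hMN; apply: qvalP.
  by apply: (idealB hN hWV); apply: hMN; apply: (rmorph_modB hM hq).
Qed.

End FormalEtale.

(** * Generated ideals and their powers *)

Definition catf (T : Type) (n1 n2 : nat) (r1 : 'I_n1 -> T) (r2 : 'I_n2 -> T)
  (i : 'I_(n1 + n2)) : T :=
  match split i with inl j => r1 j | inr j => r2 j end.

Lemma catfL T n1 n2 r1 r2 (j : 'I_n1) : @catf T n1 n2 r1 r2 (lshift n2 j) = r1 j.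
Proof. by rewrite /catf (unsplitK (inl _ j)). Qed.
Lemma catfR T n1 n2 r1 r2 (j : 'I_n2) : @catf T n1 n2 r1 r2 (rshift n1 j) = r2 j.
Proof. by rewrite /catf (unsplitK (inr _ j)). Qed.
Lemma catfP T (P : T -> Prop) n1 n2 r1 r2 :
  (forall j, P (r1 j)) -> (forall j, P (r2 j)) -> forall i, P (@catf T n1 n2 r1 r2 i).
Proof. by move=> h1 h2 i; rewrite /catf; case: (split i). Qed.

Section GeneratedIdeals.
Variable B : comPzRingType.
Implicit Types S T : B -> Prop.

Lemma ideal_gen_ideal S : ideal_of (ideal_gen S).
Proof.
split.
- by exists 0%N, (fun _ => 0), (fun _ => 0); split; [case | rewrite big_ord0].
- move=> x y [n1 [r1 [s1 [h1 ->]]]] [n2 [r2 [s2 [h2 ->]]]].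
  exists (n1 + n2)%N, (catf r1 r2), (catf s1 s2); split; first exact: catfP.
  by rewrite big_split_ord /=; congr (_ + _); apply: eq_bigr => i _;
    rewrite ?catfL ?catfR.
- move=> a x [n [r [s [h ->]]]]; exists n, (fun i => a * r i), s; split => //.
  by rewrite mulr_sumr; apply: eq_bigr => i _; rewrite mulrA.
Qed.

Lemma ideal_gen_sub S x : S x -> ideal_gen S x.
Proof.
move=> h; exists 1%N, (fun _ => 1), (fun _ => x); split => //.
by rewrite big_ord1 mul1r.
Qed.

Lemma ideal_gen_min S T : ideal_of T -> (forall x, S x -> T x) ->
  forall x, ideal_gen S x -> T x.
Proof.
move=> hT hST x [n [r [s [h ->]]]].
apply: (big_ind T); [exact: ideal0 | exact: idealD | ].
by move=> i _; apply: (idealMl hT); apply: hST.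
Qed.

Lemma ideal_gen_mono S T : (forall x, S x -> T x) ->
  forall x, ideal_gen S x -> ideal_gen T x.
Proof.
move=> h; apply: ideal_gen_min; first exact: ideal_gen_ideal.
by move=> x /h; apply: ideal_gen_sub.
Qed.

Lemma ideal_add_ideal S T : ideal_of S -> ideal_of T -> ideal_of (ideal_add S T).
Proof.
move=> hS hT; split.
- by exists 0, 0; rewrite addr0; split; [exact: ideal0 | split; first exact: ideal0].
- move=> x y [a [b [ha [hb ->]]]] [c [d [hc [hd ->]]]].
  exists (a + c), (b + d); split; first exact: idealD.
  by split; [exact: idealD | rewrite addrACA].
- move=> r x [a [b [ha [hb ->]]]]; exists (r * a), (r * b).
  by split; [exact: idealMl | split; [exact: idealMl | rewrite mulrDr]].
Qed.

Lemma ideal_addl S T x : ideal_of T -> S x -> ideal_add S T x.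
Proof. by move=> hT hx; exists x, 0; rewrite addr0; split => //; split; first exact: ideal0. Qed.
Lemma ideal_addr S T x : ideal_of S -> T x -> ideal_add S T x.
Proof. by move=> hS hx; exists 0, x; rewrite add0r; split; first exact: ideal0. Qed.

Lemma pideal_ideal p : ideal_of (pideal p B).
Proof.
split.
- by exists 0; rewrite mulr0.
- by move=> x y [a ->] [b ->]; exists (a + b); rewrite mulrDr.
- by move=> a x [b ->]; exists (a * b); rewrite mulrCA.
Qed.

Definition idpow_gen S n : B -> Prop :=
  fun y => exists t : 'I_n -> B, (forall i, S (t i)) /\ y = \prod_(i < n) t i.

Lemma idpow_ideal S n : ideal_of (idpow S n).
Proof. exact: ideal_gen_ideal. Qed.

Lemma idpow0 S x : idpow S 0 x.
Proof.
rewrite -[x]mulr1; apply: (idealMl (idpow_ideal S 0)); apply: ideal_gen_sub.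
by exists (fun _ => 0); split; [case | rewrite big_ord0].
Qed.

Lemma idpowM S a b x y : idpow S a x -> idpow S b y -> idpow S (a + b) (x * y).
Proof.
have hI := idpow_ideal S (a + b).
pose T1 x := forall y, idpow_gen S b y -> idpow S (a + b) (x * y).
have hT1 : forall x, idpow S a x -> T1 x.
  apply: ideal_gen_min.
  - split=> [y0 _ | u v hu hv y0 hy0 | r u hu y0 hy0].
    + by rewrite mul0r; exact: ideal0.
    + by rewrite mulrDl; apply: idealD => //; [apply: hu | apply: hv].
    + by rewrite -mulrA; apply: idealMl => //; apply: hu.
  - move=> u [t [ht ->]] y0 [t' [ht' ->]]; apply: ideal_gen_sub.
    exists (catf t t'); split; first exact: catfP.
    by rewrite big_split_ord /=; congr (_ * _); apply: eq_bigr => i _;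
      rewrite ?catfL ?catfR.
move=> hx; apply: (ideal_gen_min (T := fun y => idpow S (a + b) (x * y))).
- split=> [| u v hu hv | r u hu]; first by rewrite mulr0; exact: ideal0.
  + by rewrite mulrDr; apply: idealD.
  + by rewrite mulrCA; apply: idealMl.
- by move=> u hu; apply: hT1.
Qed.

Lemma idpowS S n x : idpow S n.+1 x -> idpow S n x.
Proof.
apply: ideal_gen_min; first exact: idpow_ideal.
move=> y [t [ht ->]]; rewrite big_ord_recr /=.
apply: (idealMr (idpow_ideal S n)); apply: ideal_gen_sub.
by exists (fun i => t (widen_ord (leqnSn n) i)).
Qed.

Lemma idpow_le S m n x : (m <= n)%N -> idpow S n x -> idpow S m x.
Proof. by move=> /subnK <-; elim: (n - m)%N => [|k IH] //= /idpowS /IH. Qed.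

Lemma idpowMle S a b c x y : (c <= a + b)%N ->
  idpow S a x -> idpow S b y -> idpow S c (x * y).
Proof. by move=> hc hx hy; apply: idpow_le hc (idpowM hx hy). Qed.

Lemma idpow1 S x : ideal_of S -> idpow S 1 x <-> S x.
Proof.
move=> hS; split.
- by apply: ideal_gen_min => // y [t [ht ->]]; rewrite big_ord1.
- by move=> hx; apply: ideal_gen_sub; exists (fun _ => x); rewrite big_ord1.
Qed.

Lemma idpowX S n x : S x -> idpow S n (x ^+ n).
Proof.
move=> hx; apply: ideal_gen_sub; exists (fun _ => x); split => //.
by rewrite prodr_const card_ord.
Qed.

Lemma idpowMS S n x y : ideal_of S -> idpow S n x -> S y -> idpow S n.+1 (x * y).
Proof. by move=> hS hx hy; rewrite -addn1; apply: idpowM => //; apply/idpow1. Qed.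

End GeneratedIdeals.

Lemma idpow_rmorph (B C : comPzRingType) (phi : {rmorphism B -> C}) (S : B -> Prop)
  (T : C -> Prop) n x : (forall y, S y -> T (phi y)) -> idpow S n x -> idpow T n (phi x).
Proof.
move=> h [m [r [s [hs ->]]]]; rewrite rmorph_sum.
exists m, (fun i => phi (r i)), (fun i => phi (s i)); split.
- move=> i; case: (hs i) => t [ht ->]; exists (fun j => phi (t j)).
  by split; [move=> j; apply: h | rewrite rmorph_prod].
- by apply: eq_bigr => i _; rewrite rmorphM.
Qed.

Lemma ext_ideal_ideal (A B : comPzRingType) (g : A -> B) (J : A -> Prop) :
  ideal_of (ext_ideal g J).
Proof. exact: ideal_gen_ideal. Qed.

Lemma ext_ideal_sub (A B : comPzRingType) (g : A -> B) (J : A -> Prop) x :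
  J x -> ext_ideal g J (g x).
Proof. by move=> h; apply: ideal_gen_sub; exists x. Qed.

Lemma ext_ideal_min (A B : comPzRingType) (g : A -> B) (J : A -> Prop) (T : B -> Prop) :
  ideal_of T -> (forall x, J x -> T (g x)) -> forall y, ext_ideal g J y -> T y.
Proof. by move=> hT h; apply: ideal_gen_min => // y [x [hx ->]]; apply: h. Qed.
(** * Delta-rings and Witt vectors of length 2 *)

(* The polynomial [((x + y)^p - x^p - y^p) / p] of the addition rule for delta. *)
Definition carry (B : comPzRingType) (p : nat) (x y : B) : B :=
  \sum_(1 <= i < p) ('C(p, i) %/ p)%:R * x ^+ i * y ^+ (p - i).

Section Carry.
Variables (B : comPzRingType) (p : nat).
Local Notation carry := (@carry B p).

Lemma exprD_carry (hp : prime p) (x y : B) :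
  (x + y) ^+ p = x ^+ p + y ^+ p + p%:R * carry x y.
Proof.
move: (hp) (prime_gt0 hp); rewrite /carry; case: p => [//|q] hq _.
rewrite addrC exprDn.
rewrite -(big_mkord xpredT (fun i => y ^+ (q.+1 - i) * x ^+ i *+ 'C(q.+1, i))).
rewrite big_nat_recl // big_nat_recr //= big_add1 /= subn0 expr0 mulr1 bin0 mulr1n.
rewrite subnn expr0 mul1r binn mulr1n.
set S1 := \sum_(0 <= i < q) _ *+ _.
set S2 := \sum_(0 <= i < q) _.
suff -> : S1 = q.+1%:R * S2 by ring.
rewrite /S1 /S2 mulr_sumr; apply: eq_big_nat => i /andP [_ hi].
have hd : (q.+1 %| 'C(q.+1, i.+1))%N by apply: prime_dvd_bin => //; rewrite ltnS hi.
rewrite -[in LHS](divnK hd) -[LHS]mulr_natl natrM; ring.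
Qed.

Lemma carryMM (a x y : B) : carry (a * x) (a * y) = a ^+ p * carry x y.
Proof.
rewrite /carry mulr_sumr; apply: eq_big_nat => i /andP [_ hi].
have -> : a ^+ p = a ^+ i * a ^+ (p - i) by rewrite -exprD subnKC // ltnW.
by rewrite !exprMn; ring.
Qed.

Lemma carry_ideal (T : B -> Prop) (x y : B) : ideal_of T -> T (x * y) -> T (carry x y).
Proof.
move=> hT hxy.
have -> : carry x y = x * y *
    \sum_(1 <= i < p) ('C(p, i) %/ p)%:R * x ^+ i.-1 * y ^+ (p - i).-1.
  rewrite /carry mulr_sumr; apply: eq_big_nat => i /andP [h1 h2].
  have -> : x ^+ i = x * x ^+ i.-1 by rewrite -exprS prednK.
  have -> : y ^+ (p - i) = y * y ^+ (p - i).-1 by rewrite -exprS prednK // subn_gt0.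
  ring.
exact: idealMr.
Qed.

End Carry.

Lemma rmorph_carry (B C : comPzRingType) (p : nat) (h : {rmorphism B -> C}) (x y : B) :
  h (carry p x y) = carry p (h x) (h y).
Proof.
rewrite /carry rmorph_sum; apply: eq_bigr => i _.
by rewrite !rmorphM !rmorphXn rmorph_nat.
Qed.

Section DeltaRing.
Variables (B : comPzRingType) (p : nat) (dB : B -> B) (hd : is_delta p dB).

Lemma delta0 : dB 0 = 0. Proof. by case: hd. Qed.
Lemma delta1 : dB 1 = 0. Proof. by case: hd. Qed.
Lemma deltaD (x y : B) : dB (x + y) = dB x + dB y - carry p x y. Proof. by case: hd. Qed.
Lemma deltaM (x y : B) : dB (x * y) = dB x * y ^+ p + x ^+ p * dB y + p%:R * dB x * dB y.
Proof. by case: hd. Qed.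

(* The cocycle identities of [carry], read off from the axioms of delta. *)
Lemma carry_delta (x y : B) : carry p x y = dB x + dB y - dB (x + y).
Proof. by rewrite deltaD; ring. Qed.
Lemma carryC (x y : B) : carry p x y = carry p y x.
Proof. by rewrite !carry_delta [y + x]addrC; ring. Qed.
Lemma carry0 (y : B) : carry p 0 y = 0.
Proof. by rewrite carry_delta add0r delta0 add0r subrr. Qed.
Lemma carryA (x y z : B) : carry p x y + carry p (x + y) z = carry p y z + carry p x (y + z).
Proof. by rewrite !carry_delta [x + (y + z)]addrA; ring. Qed.

End DeltaRing.

(* [(x, y)] stands for the Witt vector of length 2 with ghost components
   [(x, x^p + p y)]; the ring laws are the ones making [x |-> (x, delta x)] a
   ring morphism, and the ring axioms follow from the identities of [carry]
   in the delta-ring [B]. *)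
Definition witt2 (B : comPzRingType) (p : nat) (dB : B -> B) (hd : is_delta p dB)
  (hp : prime p) := (B * B)%type.
HB.instance Definition _ B p dB hd hp := Choice.copy (@witt2 B p dB hd hp) (B * B)%type.

Section Witt2.
Variables (B : comPzRingType) (p : nat) (dB : B -> B) (hd : is_delta p dB) (hp : prime p).
Local Notation W := (witt2 hd hp).
Local Notation carry := (carry p).

Definition wadd (a b : W) : W := (a.1 + b.1, a.2 + b.2 - carry a.1 b.1).
Definition wopp (a : W) : W := (- a.1, - a.2 + carry a.1 (- a.1)).
Definition wmul (a b : W) : W :=
  (a.1 * b.1, a.2 * b.1 ^+ p + a.1 ^+ p * b.2 + p%:R * a.2 * b.2).

Lemma waddA : associative wadd.
Proof.
move=> [a1 a2] [b1 b2] [c1 c2]; rewrite /wadd /=; congr pair; first by rewrite addrA.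
have -> : carry (a1 + b1) c1 = carry b1 c1 + carry a1 (b1 + c1) - carry a1 b1.
  by rewrite -(carryA hd); ring.
ring.
Qed.
Lemma waddC : commutative wadd.
Proof. by move=> [a1 a2] [b1 b2]; rewrite /wadd /= (carryC hd a1) addrC [a2 + _]addrC. Qed.
Lemma wadd0 : left_id (0, 0) wadd.
Proof. by move=> [a1 a2]; rewrite /wadd /= (carry0 hd) !add0r subr0. Qed.
Lemma waddN : left_inverse (0, 0) wopp wadd.
Proof. by move=> [a1 a2]; rewrite /wadd /wopp /= addNr (carryC hd (- a1)); congr pair; ring. Qed.
HB.instance Definition _ := GRing.isZmodule.Build W waddA waddC wadd0 waddN.

Lemma wmulA : associative wmul.
Proof.
move=> [a1 a2] [b1 b2] [c1 c2]; rewrite /wmul /=; congr pair; first by rewrite mulrA.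
by rewrite !exprMn; ring.
Qed.
Lemma wmulC : commutative wmul.
Proof. by move=> [a1 a2] [b1 b2]; rewrite /wmul /=; congr pair; ring. Qed.
Lemma wmul1 : left_id (1, 0) wmul.
Proof. by move=> [a1 a2]; rewrite /wmul /= expr1n; congr pair; ring. Qed.
Lemma wmulD : left_distributive wmul wadd.
Proof.
move=> [a1 a2] [b1 b2] [c1 c2]; rewrite /wmul /wadd /=; congr pair; first by ring.
by rewrite (exprD_carry hp) [a1 * c1]mulrC [b1 * c1]mulrC carryMM; ring.
Qed.
HB.instance Definition _ := GRing.Zmodule_isComPzRing.Build W wmulA wmulC wmul1 wmulD.

Lemma witt2_addE (a b : W) : a + b = wadd a b. Proof. by []. Qed.
Lemma witt2_mulE (a b : W) : a * b = wmul a b. Proof. by []. Qed.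

Lemma witt2_sub_fst (a b c : B) : ((a, b) : W) - ((a, c) : W) = (0, b - c).
Proof.
change (wadd (a, b) (wopp (a, c)) = (0, b - c)); rewrite /wadd /wopp /=.
by congr pair; [rewrite subrr | ring].
Qed.

Section WittDelta.
Variables (X : comPzRingType) (dX : X -> X) (hdX : is_delta p dX) (h : {rmorphism X -> B}).

Let witt_fun (y : X) : W := (h y, h (dX y)).
Lemma witt_fun0 : witt_fun 0 = 0.
Proof. by rewrite /witt_fun (delta0 hdX) !rmorph0. Qed.
Lemma witt_funD y z : witt_fun (y + z) = witt_fun y + witt_fun z.
Proof. by rewrite /witt_fun (deltaD hdX) rmorphB !rmorphD rmorph_carry. Qed.
Lemma witt_fun1 : witt_fun 1 = 1.
Proof. by rewrite /witt_fun (delta1 hdX) rmorph0 rmorph1. Qed.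
Lemma witt_funM y z : witt_fun (y * z) = witt_fun y * witt_fun z.
Proof.
by rewrite /witt_fun (deltaM hdX) witt2_mulE /wmul /= !rmorphD !rmorphM !rmorphXn rmorph_nat.
Qed.

Definition witt_delta : {rmorphism X -> W} :=
  mk_rmorph witt_fun0 witt_funD witt_fun1 witt_funM.

End WittDelta.

Variables (P : B -> Prop) (hP : ideal_of P) (pP : P p%:R).
Definition witt2_filt k (w : W) : Prop := idpow P k.+1 w.1 /\ idpow P k w.2.

Lemma exprp_idpow k (x : B) : idpow P k.+1 x -> idpow P k (x ^+ p).
Proof.
rewrite -(prednK (prime_gt0 hp)) exprSr => hx.
by apply: (idealMl (idpow_ideal P k)); apply: idpowS.
Qed.

Lemma witt2_filt_ideal k : ideal_of (witt2_filt k).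
Proof.
have hI1 := idpow_ideal P k.+1; have hI0 := idpow_ideal P k; split.
- by split; apply: ideal0.
- move=> [a1 a2] [b1 b2] [ha1 ha2] [hb1 hb2]; rewrite witt2_addE; split => /=.
    exact: idealD.
  apply: (idealB hI0); first exact: idealD.
  by apply: carry_ideal => //; apply: idpowMle ha1 hb1; lia.
- move=> [x1 x2] [a1 a2] [ha1 ha2]; rewrite witt2_mulE; split => /=; first exact: idealMl.
  apply: (idealD hI0); first apply: (idealD hI0).
  + by apply: (idealMl hI0); apply: exprp_idpow.
  + exact: idealMl.
  + exact: idealMl.
Qed.

Lemma witt2_filtM k u v : witt2_filt k u -> witt2_filt k v -> witt2_filt k.+1 (u * v).
Proof.
move: u v => [a1 a2] [b1 b2] [ha1 ha2] [hb1 hb2]; rewrite witt2_mulE; split => /=.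
  by apply: idpowMle ha1 hb1; lia.
have hI := idpow_ideal P k.+1.
have hp1 : (p = p.-1.+1)%N by rewrite prednK // prime_gt0.
apply: (idealD hI); first apply: (idealD hI).
- rewrite hp1 exprSr mulrCA; apply: (idealMl hI); apply: idpowMle ha2 hb1; lia.
- rewrite hp1 exprSr -mulrA; apply: (idealMl hI); apply: idpowMle ha1 hb2; lia.
- rewrite -mulrA mulrC; apply: idpowMS => //; apply: idpowMle ha2 hb2; lia.
Qed.

End Witt2.

Section DeltaPowers.
Variables (B : comPzRingType) (p : nat) (dB : B -> B) (hd : is_delta p dB) (hp : prime p).
Variables (Q : B -> Prop) (hQ : ideal_of Q) (pQ : Q p%:R).

Lemma delta_prod k (t : 'I_k.+1 -> B) :
  (forall i, Q (t i)) -> idpow Q k (dB (\prod_(i < k.+1) t i)).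
Proof.
elim: k t => [|k IH] t ht; first exact: idpow0.
have hI := idpow_ideal Q k.+1; have p_gt0 := prime_gt0 hp.
rewrite big_ord_recr /= (deltaM hd).
set m := \prod_(i < k.+1) _; set u := t ord_max.
have hm : idpow Q k.+1 m.
  by apply: ideal_gen_sub; exists (fun i => t (widen_ord (leqnSn k.+1) i)).
have hdm : idpow Q k (dB m) by apply: IH.
apply: (idealD hI); first apply: (idealD hI).
- by apply: (idpowMS hQ hdm); apply: (idealX hQ p_gt0); apply: ht.
- by apply: (idealMr hI); apply: (idealX hI p_gt0).
- by rewrite [p%:R * _]mulrC; apply: (idealMr hI); apply: idpowMS.
Qed.

Lemma delta_idpow k x : idpow Q k.+1 x -> idpow Q k (dB x).
Proof.
have hI := idpow_ideal Q; have p_gt0 := prime_gt0 hp.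
move=> [n [r [s [hs ->]]]]; elim: n r s hs => [|n IH] r s hs.
  by rewrite big_ord0 (delta0 hd); apply: ideal0.
rewrite big_ord_recr /= (deltaD hd).
set S := \sum_(i < n) _.
have hy : idpow Q k.+1 (s ord_max) by apply: ideal_gen_sub; apply: hs.
have hdy : idpow Q k (dB (s ord_max)) by case: (hs ord_max) => t [ht ->]; apply: delta_prod.
have hS : idpow Q k.+1 S.
  apply: (big_ind (idpow Q k.+1)); [exact: ideal0 | exact: idealD |].
  by move=> i _; apply: (idealMl (hI _)); apply: ideal_gen_sub; apply: hs.
apply: (idealB (hI k)); first apply: (idealD (hI k)).
- exact: (IH (fun i => r (widen_ord (leqnSn n) i))).
- rewrite (deltaM hd); apply: (idealD (hI k)); first apply: (idealD (hI k)).
  + by apply: (idealMl (hI k)); apply: idpowS; apply: (idealX (hI _) p_gt0).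
  + exact: (idealMl (hI k)).
  + exact: (idealMl (hI k)).
- by apply: carry_ideal => //; apply: (idealMr (hI k)); apply: idpowS.
Qed.

End DeltaPowers.

(** * Invertible ideals and adic completeness *)

Lemma radical_ideal (B : comPzRingType) (T : B -> Prop) :
  ideal_of T -> ideal_of (fun z => exists k, T (z ^+ k)).
Proof.
move=> hT; split.
- by exists 1%N; rewrite expr1; apply: ideal0.
- move=> a b [m ha] [l hb]; exists (m + l)%N; rewrite exprDn.
  apply: (big_ind T); [exact: ideal0 | exact: idealD | move=> i _].
  rewrite -mulr_natr; apply: (idealMr hT).
  case: (leqP l i) => hli.
  + by rewrite -(subnK hli) exprD mulrCA; apply/(idealMl hT)/(idealMl hT).
  + have hm : (m <= m + l - i)%N by rewrite -addnBA ?leq_addr // ltnW.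
    by rewrite -(subnKC hm) exprD; apply/(idealMr hT)/(idealMr hT).
- by move=> a z [k hz]; exists k; rewrite exprMn; apply: idealMl.
Qed.

Definition finitely_generated (B : comPzRingType) (K : B -> Prop) : Prop :=
  exists (m : nat) (d : 'I_m -> B), (forall j, K (d j)) /\
    forall x, K x -> exists be : 'I_m -> B, x = \sum_(j < m) d j * be j.

(* Locally [s_i^k x] lies in [(d_i)], so the [s_i], which generate the unit
   ideal, lie in the radical of the colon ideal [((d) : x)]. *)
Lemma invertible_ideal_fg (B : comPzRingType) (K : B -> Prop) :
  invertible_ideal K -> finitely_generated K.
Proof.
move=> [n [s [d [c [hsum hi]]]]]; exists n, d; split=> [j | x hx]; first by case: (hi j).
pose T z := exists be : 'I_n -> B, z * x = \sum_(j < n) d j * be j.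
have hT : ideal_of T.
  split.
  - by exists (fun _ => 0); rewrite mul0r big1 // => j _; rewrite mulr0.
  - move=> a b [ba ea] [bb eb]; exists (fun j => ba j + bb j).
    by rewrite mulrDl ea eb -big_split; apply: eq_bigr => j _; rewrite mulrDr.
  - move=> a b [bb eb]; exists (fun j => a * bb j).
    by rewrite -mulrA eb mulr_sumr; apply: eq_bigr => j _; rewrite mulrCA.
have hR := radical_ideal hT.
have [k [be e]] : exists k, T (1 ^+ k).
  rewrite -hsum; apply: (big_ind _ (ideal0 hR) (idealD hR)) => i _.
  apply: (idealMl hR); case: (hi i) => _ /(_ x hx) [k [y e]] _.
  exists k, (fun j => if j == i then y else 0).
  by rewrite e (bigD1 i) //= eqxx big1 ?addr0 // => j /negbTE ->; rewrite mulr0.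
by exists be; rewrite -e expr1n mul1r.
Qed.

Lemma idpow_pideal_split (B : comPzRingType) (p : nat) (K : B -> Prop) (hK : ideal_of K) n y :
  idpow (ideal_add (pideal p B) K) n y -> exists b, K (y - p%:R ^+ n * b).
Proof.
pose T y := exists b, K (y - p%:R ^+ n * b).
have hT : ideal_of T.
  split.
  - by exists 0; rewrite mulr0 subr0; apply: ideal0.
  - move=> a b [ba ea] [bb eb]; exists (ba + bb).
    have -> : a + b - p%:R ^+ n * (ba + bb) =
      (a - p%:R ^+ n * ba) + (b - p%:R ^+ n * bb) by ring.
    exact: idealD.
  - move=> a z [bz ez]; exists (a * bz).
    have -> : a * z - p%:R ^+ n * (a * bz) = a * (z - p%:R ^+ n * bz) by ring.
    exact: idealMl.
apply: (ideal_gen_min hT) => {}y [t [ht ->]].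
rewrite /T {hT T}; elim: n t ht => [|n IH] t ht.
  by exists 1; rewrite big_ord0 expr0 mulr1 subrr; apply: ideal0.
rewrite big_ord_recr /=.
have [b eb] := IH (fun i => t (widen_ord (leqnSn n) i)) (fun i => ht _).
case: (ht ord_max) => u [k [[c ->] [hk ->]]]; exists (b * c).
set m := \prod_(i < n) _.
have -> : m * (p%:R * c + k) - p%:R ^+ n.+1 * (b * c) =
   (m - p%:R ^+ n * b) * (p%:R * c + k) + p%:R ^+ n * b * k by rewrite exprSr; ring.
by apply: (idealD hK); [apply: (idealMr hK) | apply: (idealMl hK)].
Qed.

Section AdicSeries.
Variables (B : comPzRingType) (P : B -> Prop) (hc : adic_complete P).

Lemma adic_eq a b : (forall n, idpow P n.+1 (a - b)) -> a = b.
Proof.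
move=> h; apply/eqP; rewrite -subr_eq0; apply/eqP.
by apply: hc.1 => [[|n]]; [apply: idpow0 | apply: h].
Qed.

Lemma adic_series (pi : B) (hpi : P pi) (a : nat -> B) :
  exists s, forall M, idpow P M (s - \sum_(0 <= n < M) pi ^+ n * a n).
Proof.
apply: hc.2 => M; rewrite big_nat_recr //= addrAC subrr add0r.
by apply: (idealMr (idpow_ideal _ _)); apply: idpowX.
Qed.

Lemma fg_ideal_series (K : B -> Prop) (hK : ideal_of K) (hfg : finitely_generated K)
  (pi : B) (hpi : P pi) (e : nat -> B) (he : forall n, K (e n)) :
  exists2 y, K y & forall M, idpow P M (y - \sum_(0 <= n < M) pi ^+ n * e n).
Proof.
have [m [d [hd /(_ _ (he _)) hbe]]] := hfg.
have [be {}hbe] := @ClassicalEpsilon.choice _ _ _ hbe.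
have [sg hsg] := @ClassicalEpsilon.choice _ _ _ (fun j => adic_series hpi (be^~ j)).
exists (\sum_(j < m) d j * sg j).
  by apply: (big_ind K); [exact: ideal0 | exact: idealD | move=> j _; apply: idealMr].
move=> M; have hPM := idpow_ideal P M.
have -> : \sum_(0 <= n < M) pi ^+ n * e n =
    \sum_(j < m) d j * \sum_(0 <= n < M) pi ^+ n * be n j.
  under eq_bigr => n _ do rewrite hbe mulr_sumr.
  rewrite exchange_big; apply: eq_bigr => j _; rewrite mulr_sumr.
  by apply: eq_bigr => n _; rewrite mulrCA.
rewrite -sumrB; apply: (big_ind _ (ideal0 hPM) (idealD hPM)) => j _.
by rewrite -mulrBr; apply: idealMl.
Qed.

End AdicSeries.

(* If [B/K] has bounded [p^oo]-torsion, then [K] is closed for the [(p, K)]-adic topology. *)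
Lemma ideal_adic_closed (B : comPzRingType) (p : nat) (K : B -> Prop) (hK : ideal_of K)
  (hfg : finitely_generated K) (hc : adic_complete (ideal_add (pideal p B) K))
  (N : nat) (hbd : forall (x : B) k, K (p%:R ^+ k * x) -> K (p%:R ^+ N * x)) x :
  (forall n, ideal_add K (idpow (ideal_add (pideal p B) K) n) x) -> K x.
Proof.
move=> hx; set P := ideal_add (pideal p B) K.
have pP : P p%:R by apply: ideal_addl => //; exists 1; rewrite mulr1.
have hb n : exists b, K (x - p%:R ^+ n * b).
  case: (hx n) => a [y [ha [/(idpow_pideal_split hK) [b hyb] ->]]].
  by exists b; rewrite -addrA; apply: idealD.
have {hb} [b hb] := @ClassicalEpsilon.choice _ _ _ hb.
pose c n := p%:R ^+ n * b n.
(* [c] is Cauchy with increments [p^n e_n], [e_n] in [K] by boundedness. *)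
pose e n := p%:R ^+ N * (b (N + n) - p%:R * b (N + n).+1).
have he n : K (e n).
  apply: (hbd _ (N + n)%N).
  have := idealB hK (hb (N + n).+1) (hb (N + n)).
  by congr K; rewrite exprSr; ring.
have hce M : c N - c (N + M)%N = \sum_(0 <= n < M) p%:R ^+ n * e n.
  elim: M => [|M IH]; first by rewrite addn0 subrr big_geq.
  by rewrite big_nat_recr //= -IH addnS /c /e exprSr exprD; ring.
have [y hy hys] := fg_ideal_series hc hK hfg pP he.
suff hcy : c N = y by rewrite -(subrK (c N) x); apply: (idealD hK); [exact: (hb N) | rewrite hcy].
apply: (adic_eq hc) => M.
have -> : c N - y = c (N + M.+1)%N - (y - \sum_(0 <= n < M.+1) p%:R ^+ n * e n).
  by rewrite -hce; ring.
apply: (idealB (idpow_ideal _ _)) (hys M.+1).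
apply: (idealMr (idpow_ideal _ _)); apply: (idpow_le (leq_addl N M.+1)); exact: idpowX.
Qed.

Lemma rmorph_mod_trans (X E : comPzRingType) (M : E -> Prop) (hM : ideal_of M)
  (w H : X -> E) : rmorph_mod M w -> (forall y, M (H y - w y)) -> rmorph_mod M H.
Proof.
move=> [wD wM w1] hHw; split.
- move=> y z.
  have -> : H (y + z) - (H y + H z) = (H (y + z) - w (y + z)) - (H y - w y)
      - (H z - w z) + (w (y + z) - (w y + w z)) by ring.
  by apply: (idealD hM) => //; apply: (idealB hM); first apply: (idealB hM).
- move=> y z.
  have -> : H (y * z) - H y * H z = (H (y * z) - w (y * z)) - (H y - w y) * H z
      - w y * (H z - w z) + (w (y * z) - w y * w z) by ring.
  apply: (idealD hM) => //; apply: (idealB hM); first apply: (idealB hM) => //.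
  + exact: idealMr.
  + exact: idealMl.
- have -> : H 1 - 1 = (H 1 - w 1) + (w 1 - 1) by ring.
  exact: idealD.
Qed.

Section AdicLimit.
Variables (X B : comPzRingType) (P : B -> Prop) (hc : adic_complete P).

Lemma adic_rmorph (H : X -> B) : (forall n, rmorph_mod (idpow P n.+1) H) ->
  exists H' : {rmorphism X -> B}, forall y, H' y = H y.
Proof.
move=> hH.
have HD y z : H (y + z) = H y + H z by apply: (adic_eq hc) => n; case: (hH n).
have HM y z : H (y * z) = H y * H z by apply: (adic_eq hc) => n; case: (hH n).
have H1 : H 1 = 1 by apply: (adic_eq hc) => n; case: (hH n).
have H0 : H 0 = 0 by apply: (addrI (H 0)); rewrite -HD !addr0.
by exists (mk_rmorph H0 HD H1 HM).
Qed.

Lemma adic_limit_rmorph (ws : nat -> X -> B)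
  (hws : forall n, rmorph_mod (idpow P n.+1) (ws n))
  (hcauchy : forall n y, idpow P n.+1 (ws n.+1 y - ws n y)) :
  exists H : {rmorphism X -> B}, forall n y, idpow P n.+1 (H y - ws n y).
Proof.
have hlim y : exists z, forall n, idpow P n (z - ws n y).
  by apply: hc.2 => n; apply: idpowS.
have [H0 hH0] := @ClassicalEpsilon.choice _ _ _ hlim.
have hH0S n y : idpow P n.+1 (H0 y - ws n y).
  have -> : H0 y - ws n y = (H0 y - ws n.+1 y) + (ws n.+1 y - ws n y) by ring.
  by apply: (idealD (idpow_ideal _ _)); [apply: hH0 | apply: hcauchy].
have [H eH] := adic_rmorph (fun n => rmorph_mod_trans (idpow_ideal _ _) (hws n) (hH0S n)).
by exists H => n y; rewrite eH.
Qed.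

End AdicLimit.

(** * Étale lifting along a filtration *)

Section EtaleFiltration.
Variables (A A' : comPzRingType) (f : {rmorphism A -> A'}).
Variables (K : nat -> A -> Prop) (K' : nat -> A' -> Prop).
Hypotheses (hfe : forall n, formally_etale_mod f (K n) (K' n))
  (hKK : forall n x, K n x -> K' n (f x)) (hK'S : forall n y, K' n.+1 y -> K' n y).
Variables (E : comPzRingType) (M : nat -> E -> Prop).
Hypotheses (hM : forall n, ideal_of (M n)) (hMS : forall n x, M n.+1 x -> M n x)
  (hMM : forall n x y, M n x -> M n y -> M n.+1 (x * y)).

Lemma etale_filtration_uniq (w1 w2 : A' -> E)
  (r1 : forall n, rmorph_mod (M n) w1) (r2 : forall n, rmorph_mod (M n) w2) :
  (forall n y, K' n y -> M n (w1 y)) -> (forall n y, K' n y -> M n (w2 y)) ->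
  (forall n x, M n (w1 (f x) - w2 (f x))) -> (forall y, M 0 (w1 y - w2 y)) ->
  forall n y, M n (w1 y - w2 y).
Proof.
move=> k1 k2 hf h0; elim=> // n IH.
exact: (formally_etale_mod_uniq (@hfe n.+1) (hM n.+1) (hM n) (@hMS n) (@hMM n)
          (@hKK n.+1) (r1 _) (r2 _) (k1 _) (k2 _) (hf _) IH).
Qed.

Variable u : {rmorphism A -> E}.
Hypothesis hu : forall n x, K n x -> M n (u x).

Definition approx_lift n (w : A' -> E) : Prop :=
  [/\ rmorph_mod (M n) w, (forall y, K' n y -> M n (w y)) & forall x, M n (w (f x) - u x)].

Lemma approx_lift_step n w : approx_lift n w ->
  exists w', approx_lift n.+1 w' /\ forall y, M n (w' y - w y).
Proof.
case=> rw kw cw.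
have [w' [r' k' c' n']] := formally_etale_mod_lift (@hfe n.+1) (hM n.+1) (hM n)
  (@hMS n) (@hMM n) (rmorph_rmorph_mod (hM n.+1) u) (@hu n.+1) rw
  (fun y hy => kw y (hK'S hy)) cw.
by exists w'.
Qed.

Lemma approx_lift_seq w0 : approx_lift 0 w0 ->
  exists ws : nat -> A' -> E, [/\ ws 0%N = w0, forall n, approx_lift n (ws n)
    & forall n y, M n (ws n.+1 y - ws n y)].
Proof.
move=> hw0.
have hnext (t : nat * (A' -> E)) : exists w', approx_lift t.1 t.2 ->
    approx_lift t.1.+1 w' /\ forall y, M t.1 (w' y - t.2 y).
  have [/approx_lift_step [w' hw'] | nlift] := classic (approx_lift t.1 t.2).
    by exists w' => _.
  by exists t.2 => /nlift.
have [next hnext'] := @ClassicalEpsilon.choice _ _ _ hnext.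
pose fix ws n := if n is k.+1 then next (k, ws k) else w0.
have hws n : approx_lift n (ws n) by elim: n => // n IH; case: (hnext' (n, ws n) IH).
exists ws; split=> // n y.
by case: (hnext' (n, ws n) (hws n)) => _ /(_ y).
Qed.

End EtaleFiltration.

(** * Structure maps over (R, I) *)

Section StructureIdeals.
Variables (p : nat) (R : comPzRingType) (I : R -> Prop).
Local Notation PR := (ideal_add (pideal p R) I).
Variables (X C : comPzRingType) (sX : {rmorphism R -> X}) (sC : {rmorphism R -> C}).
Local Notation PC := (ideal_add (pideal p C) (ext_ideal sC I)).

Lemma struct_pI r : PR r -> PC (sC r).
Proof.
move=> [a [b [[c ->] [hb ->]]]]; rewrite rmorphD rmorphM rmorph_nat.
exists (p%:R * sC c), (sC b); split; first by exists (sC c).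
by split => //; apply: ext_ideal_sub.
Qed.

Variables (phi : {rmorphism X -> C}) (hphi : forall r, phi (sX r) = sC r).

Lemma pI_rmorph y : ideal_add (pideal p X) (ext_ideal sX I) y -> PC (phi y).
Proof.
move=> [a [b [[c ->] [hb ->]]]]; rewrite rmorphD rmorphM rmorph_nat.
exists (p%:R * phi c), (phi b); split; first by exists (phi c).
split => //; move: hb; apply: (ext_ideal_min (T := fun y => ext_ideal sC I (phi y))).
  exact/preim_ideal/ext_ideal_ideal.
by move=> r hr; rewrite hphi; apply: ext_ideal_sub.
Qed.

Lemma struct_idpow n x : ext_ideal sX (idpow PR n) x -> idpow PC n (phi x).
Proof.
apply: (ext_ideal_min (T := fun x => idpow PC n (phi x))).
  exact/preim_ideal/idpow_ideal.
by move=> r hr; rewrite hphi; apply: idpow_rmorph hr; apply: struct_pI.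
Qed.

End StructureIdeals.

Lemma rmorph_mod_struct_idpow (p : nat) (R X C : comPzRingType) (I : R -> Prop)
  (sX : {rmorphism R -> X}) (sC : {rmorphism R -> C}) (T : C -> Prop) (hT : ideal_of T)
  (w : X -> C) (hw : rmorph_mod T w) (hs : forall r, T (w (sX r) - sC r)) n x :
  ext_ideal sX (idpow (ideal_add (pideal p R) I) n) x ->
  ideal_add T (idpow (ideal_add (pideal p C) (ext_ideal sC I)) n) (w x).
Proof.
set Pn := idpow (ideal_add (pideal p C) (ext_ideal sC I)) n.
have hPn : ideal_of Pn by apply: idpow_ideal.
have hTP := ideal_add_ideal hT hPn.
apply: (ext_ideal_min (T := fun x => ideal_add T Pn (w x))).
- split.
  + exact/ideal_addl/(rmorph_mod0 hT hw).
  + move=> y z hy hz; rewrite -(subrK (w y + w z) (w (y + z))).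
    by apply: idealD => //; [apply: ideal_addl => //; exact: (rmorph_modD hw) | apply: idealD].
  + move=> a y [t [q [ht [hq e]]]].
    have -> : w (a * y) = (w (a * y) - w a * w y + w a * t) + w a * q.
      by rewrite -addrA -mulrDr -e subrK.
    apply: (idealD hTP); last by apply: ideal_addr => //; apply: idealMl.
    by apply: ideal_addl => //; apply: (idealD hT); [exact: (rmorph_modM hw) | apply: idealMl].
- move=> r hr; rewrite -(subrK (sC r) (w (sX r))).
  apply: (idealD hTP); first exact: ideal_addl.
  by apply: ideal_addr => //; apply: idpow_rmorph hr; apply: struct_pI.
Qed.

Lemma dmor_comp (R X Y Z : comPzRingType) (dX : X -> X) (sX : {rmorphism R -> X})
  (JX : X -> Prop) (dY : Y -> Y) (sY : {rmorphism R -> Y}) (JY : Y -> Prop)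
  (dZ : Z -> Z) (sZ : {rmorphism R -> Z}) (JZ : Z -> Prop)
  (g : {rmorphism X -> Y}) (k : {rmorphism Y -> Z}) :
  dmor_over dX sX JX dY sY JY g -> dmor_over dY sY JY dZ sZ JZ k ->
  dmor_over dX sX JX dZ sZ JZ (k \o g)%FUN.
Proof.
move=> [g1 g2 g3] [k1 k2 k3]; split=> [x | x hx | r] /=.
- by rewrite g1 k1.
- exact/k2/g2.
- by rewrite g3 k3.
Qed.

Lemma dmor_id (R X : comPzRingType) (dX : X -> X) (sX : {rmorphism R -> X}) (JX : X -> Prop) :
  dmor_over dX sX JX dX sX JX idfun.
Proof. by []. Qed.
(** * Transfer of prismatic envelopes along f *)

Section Transfer.
Variables (p : nat) (hp : prime p) (R : comPzRingType) (dR : R -> R) (I : R -> Prop).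
Variables (A : comPzRingType) (dA : A -> A) (sA : {rmorphism R -> A}) (J : A -> Prop).
Variables (A' : comPzRingType) (dA' : A' -> A') (sA' : {rmorphism R -> A'}) (J' : A' -> Prop).
Hypothesis hA' : dpair_over p dR I dA' sA' J'.
Variables (f : {rmorphism A -> A'}) (hf : dmor_over dA sA J dA' sA' J' f).
Hypothesis hetale : forall n : nat, (0 < n)%N ->
  etale_mod f (ext_ideal sA (idpow (ideal_add (pideal p R) I) n))
              (ext_ideal sA' (idpow (ideal_add (pideal p R) I) n)).
Hypotheses (hinj : forall x, J' (f x) -> J x) (hsurj : forall y, exists x, J' (y - f x)).

Local Notation PR := (ideal_add (pideal p R) I).
Local Notation Kn n := (ext_ideal sA (idpow PR n.+1)).
Local Notation K'n n := (ext_ideal sA' (idpow PR n.+1)).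

Let hJ' : ideal_of J'. Proof. by case: hA'. Qed.
Let hdA' : is_delta p dA'. Proof. by case: hA'. Qed.
Let f_struct r : f (sA r) = sA' r. Proof. by case: hf. Qed.
Let f_delta x : f (dA x) = dA' (f x). Proof. by case: hf. Qed.

Let hfe n : formally_etale_mod f (Kn n) (K'n n).
Proof. by case: (hetale (ltn0Sn n)). Qed.

Let hfK n x : Kn n x -> K'n n (f x).
Proof.
apply: (ext_ideal_min (T := fun x => K'n n (f x))); first exact/preim_ideal/ext_ideal_ideal.
by move=> r hr; rewrite f_struct; apply: ext_ideal_sub.
Qed.

Let hK'S n y : K'n n.+1 y -> K'n n y.
Proof. by apply: ideal_gen_mono => _ [r [hr ->]]; exists r; split => //; apply: idpowS. Qed.

Section Lift.
Variables (B : comPzRingType) (dB : B -> B) (sB : {rmorphism R -> B}).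
Hypothesis hB : bprism_over p dR I dB sB.
Local Notation IB := (ext_ideal sB I).
Local Notation P := (ideal_add (pideal p B) IB).

Let hIB : ideal_of IB. Proof. exact: ext_ideal_ideal. Qed.
Let hP : ideal_of P. Proof. exact: ideal_add_ideal (pideal_ideal B p) hIB. Qed.
Let pP : P p%:R. Proof. by apply: ideal_addl => //; exists 1; rewrite mulr1. Qed.
Let IB_P1 x : IB x -> idpow P 1 x.
Proof. by move=> hx; apply/(idpow1 x hP); apply: (ideal_addr (pideal_ideal B p) hx). Qed.
Let hdB : is_delta p dB. Proof. by case: hB. Qed.
Let hBP : is_bounded_prism p dB IB. Proof. by case: hB. Qed.
Let hcomp : adic_complete P. Proof. by case: hBP. Qed.

Let hPn n : ideal_of (idpow P n.+1). Proof. exact: idpow_ideal. Qed.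
Let hPS n x : idpow P n.+2 x -> idpow P n.+1 x. Proof. exact: idpowS. Qed.
Let hPM n x y : idpow P n.+1 x -> idpow P n.+1 y -> idpow P n.+2 (x * y).
Proof. by move=> hx hy; apply: idpowMle hx hy; lia. Qed.

Lemma lift_uniq (h1 h2 : {rmorphism A' -> B}) :
  (forall y, J' y -> IB (h1 y)) -> (forall r, h1 (sA' r) = sB r) ->
  (forall y, J' y -> IB (h2 y)) -> (forall r, h2 (sA' r) = sB r) ->
  (forall x, h1 (f x) = h2 (f x)) -> forall y, h1 y = h2 y.
Proof.
move=> j1 s1 j2 s2 hff y; apply: (adic_eq hcomp) => n; move: n y.
apply: (etale_filtration_uniq hfe hfK hPn hPS hPM) => [n | n | n y | n y | n x | y].
- exact: rmorph_rmorph_mod.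
- exact: rmorph_rmorph_mod.
- exact: struct_idpow.
- exact: struct_idpow.
- by rewrite hff subrr; apply: ideal0.
- have [x hx] := hsurj y.
  have -> : h1 y - h2 y = h1 (y - f x) - h2 (y - f x) by rewrite !rmorphB hff; ring.
  by apply: IB_P1; apply: (idealB hIB); [apply: j1 | apply: j2].
Qed.

Lemma lift_uniq_dmor (h1 h2 : {rmorphism A' -> B}) :
  dmor_over dA' sA' J' dB sB IB h1 -> dmor_over dA' sA' J' dB sB IB h2 ->
  (forall x, h1 (f x) = h2 (f x)) -> forall y, h1 y = h2 y.
Proof. by move=> [_ j1 s1] [_ j2 s2]; apply: lift_uniq. Qed.

Variables (h0 : {rmorphism A -> B}) (hh0 : dmor_over dA sA J dB sB IB h0).

Let h0_delta x : h0 (dA x) = dB (h0 x). Proof. by case: hh0. Qed.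
Let h0J x : J x -> IB (h0 x). Proof. by case: hh0 => _ h _; apply: h. Qed.
Let h0_struct r : h0 (sA r) = sB r. Proof. by case: hh0. Qed.
Let h0_idpow n x : Kn n x -> idpow P n.+1 (h0 x). Proof. exact: struct_idpow. Qed.

Definition sect (y : A') : A := epsilon (inhabits 0) (fun x => J' (y - f x)).

Lemma sectP y : J' (f (sect y) - y).
Proof. exact: (idealBC hJ' (epsilon_spec (inhabits 0) (fun x => J' (y - f x)) (hsurj y))). Qed.

Definition lift0 (y : A') : B := h0 (sect y).

Lemma lift0_congr x y : J' (f x - y) -> IB (h0 x - lift0 y).
Proof.
move=> hxy; rewrite -rmorphB; apply: h0J; apply: hinj; rewrite rmorphB.
rewrite -(subrK y (f x)) -addrA; apply: (idealD hJ' hxy).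
exact: (idealBC hJ' (sectP y)).
Qed.

Lemma lift0_rmorph_mod : rmorph_mod IB lift0.
Proof.
have sP := sectP; split=> [y z | y z |].
- rewrite -opprB -rmorphD; apply: (idealN hIB); apply: lift0_congr.
  by rewrite rmorphD opprD addrACA; apply: (idealD hJ').
- rewrite -opprB -rmorphM; apply: (idealN hIB); apply: lift0_congr.
  have -> : f (sect y * sect z) - y * z =
      (f (sect y) - y) * f (sect z) + y * (f (sect z) - z) by rewrite rmorphM; ring.
  by apply: (idealD hJ'); [apply: (idealMr hJ') | apply: (idealMl hJ')].
- have := lift0_congr (x := 1) (y := 1); rewrite !rmorph1 subrr.
  by move=> /(_ (ideal0 hJ')) /(idealBC hIB).
Qed.

Lemma lift0_f x : IB (lift0 (f x) - h0 x).
Proof. by apply: (idealBC hIB); apply: lift0_congr; rewrite subrr; apply: ideal0. Qed.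

Lemma lift0_struct r : IB (lift0 (sA' r) - sB r).
Proof.
rewrite -h0_struct; apply: (idealBC hIB); apply: lift0_congr.
by rewrite f_struct subrr; apply: ideal0.
Qed.

Lemma lift0_J y : J' y -> IB (lift0 y).
Proof.
move=> hy; have := lift0_congr (x := 0) (y := y).
by rewrite !rmorph0 !sub0r => /(_ (idealN hJ' hy)) /(idealN hIB); rewrite opprK.
Qed.

Local Notation approx := (approx_lift f (fun n => K'n n) (fun n => idpow P n.+1) h0).

Lemma lift0_approx : approx 0 lift0.
Proof.
split=> [| y hy | x] /=; first exact: (rmorph_mod_sub lift0_rmorph_mod IB_P1).
- have [a [b [ha [hb ->]]]] := rmorph_mod_struct_idpow hIB lift0_rmorph_mod lift0_struct hy.
  by apply: (idealD (hPn 0)) hb; apply: IB_P1.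
- by apply: IB_P1; apply: lift0_f.
Qed.

Lemma lift_rmorph : exists H : {rmorphism A' -> B},
  (forall x, H (f x) = h0 x) /\ forall y, idpow P 1 (H y - lift0 y).
Proof.
have [ws [ws0 hws hcauchy]] := approx_lift_seq hfe hK'S hPn hPS hPM h0_idpow lift0_approx.
have [H hH] := adic_limit_rmorph hcomp (fun n => let: And3 r _ _ := hws n in r) hcauchy.
exists H; split=> [x | y]; last by rewrite -ws0; exact: (hH 0%N y).
apply: (adic_eq hcomp) => n; case: (hws n) => _ _ /(_ x) hn.
rewrite -(subrK (ws n (f x)) (H (f x))) -addrA.
by apply: (idealD (hPn n)) hn; apply: hH.
Qed.

Section LiftProperties.
Variables (H : {rmorphism A' -> B}) (HF : forall x, H (f x) = h0 x).

Let H_struct r : H (sA' r) = sB r. Proof. by rewrite -f_struct HF h0_struct. Qed.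

(* [H] agrees with [lift0] modulo [IB + P^(n+1)] for all [n], and [IB] is closed. *)
Lemma lift_ideal (H0 : forall y, idpow P 1 (H y - lift0 y)) y : J' y -> IB (H y).
Proof.
move=> hy; have [_ _ /invertible_ideal_fg hfg _ [_ [N hbd]]] := hBP.
pose M n := ideal_add IB (idpow P n.+1).
have hM n : ideal_of (M n) by apply: ideal_add_ideal.
have ch : forall n y, M n (H y - lift0 y).
  apply: (etale_filtration_uniq hfe hfK hM) => [n x | n x x' | n | n | n z hz | n z hz | n x | z].
  - by move=> [a [b [ha [hb ->]]]]; exists a, b; split => //; split => //; apply: idpowS.
  - move=> [a [b [ha [hb ->]]]] [c [d [hc [hd ->]]]].
    exists (a * (c + d) + b * c), (b * d); split; last by split; [apply: hPM | ring].
    by apply: (idealD hIB); [apply: (idealMr hIB) | apply: (idealMl hIB)].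
  - exact: rmorph_rmorph_mod.
  - by apply: (rmorph_mod_sub lift0_rmorph_mod) => z; apply: (ideal_addl (hPn n)).
  - by apply: (ideal_addr hIB); apply: (struct_idpow H_struct hz).
  - exact: (rmorph_mod_struct_idpow hIB lift0_rmorph_mod lift0_struct hz).
  - by rewrite HF -opprB; apply: (ideal_addl (hPn n)); apply: (idealN hIB); apply: lift0_f.
  - by apply: (ideal_addr hIB); apply: H0.
apply: (ideal_adic_closed hIB hfg hcomp hbd) => -[|n].
  by apply: (ideal_addr hIB); apply: idpow0.
have [a [b [ha [hb e]]]] := ch n y.
exists (a + lift0 y), b; split; first by apply: (idealD hIB ha); apply: lift0_J.
by split=> //; rewrite addrAC -e subrK.
Qed.

(* [y |-> (H y, H (delta y))] and [y |-> (H y, delta (H y))] are two ring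
   morphisms into [W_2(B)] that agree on [f(A)], hence coincide modulo the
   filtration [P^(n+1) x P^n]. *)
Lemma lift_delta y : H (dA' y) = dB (H y).
Proof.
pose psi1 := witt_delta hdB hp hdA' H.
pose psi2 := (witt_delta hdB hp hdB idfun \o H)%FUN.
have psiB z : psi1 z - psi2 z = (0, H (dA' z) - dB (H z)) by apply: witt2_sub_fst.
have hM := witt2_filt_ideal hdB hp P.
have hMS n (w : witt2 hdB hp) : witt2_filt P n.+1 w -> witt2_filt P n w by case=> h1 h2; split; apply: idpowS.
have hQ' : ideal_of (ideal_add (pideal p A') (ext_ideal sA' I)).
  exact: ideal_add_ideal (pideal_ideal A' p) (ext_ideal_ideal _ _).
have pQ' : ideal_add (pideal p A') (ext_ideal sA' I) p%:R.
  by apply: (ideal_addl (ext_ideal_ideal _ _)); exists 1; rewrite mulr1.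
have ch := etale_filtration_uniq hfe hfK hM hMS (witt2_filtM hP pP)
  (fun n => rmorph_rmorph_mod (hM n) psi1) (fun n => rmorph_rmorph_mod (hM n) psi2).
apply: (adic_eq hcomp) => n.
suff /(_ n.+1 y) : forall n z, witt2_filt P n (psi1 z - psi2 z) by rewrite psiB => -[].
apply: ch.
- move=> {}n z hz; split; first exact: (struct_idpow H_struct hz).
  apply: (idpow_rmorph (pI_rmorph H_struct)); apply: (delta_idpow hdA' hp hQ' pQ').
  exact: (struct_idpow (phi := idfun) (fun r => erefl) hz).
- move=> {}n z hz; split; first exact: (struct_idpow H_struct hz).
  exact: (delta_idpow hdB hp hP pP (struct_idpow H_struct hz)).
- move=> {}n x; rewrite psiB -f_delta !HF h0_delta subrr.
  by split; apply: (ideal0 (idpow_ideal _ _)).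
- by move=> z; rewrite psiB; split; [apply: (ideal0 (idpow_ideal _ _)) | apply: idpow0].
Qed.

End LiftProperties.

Lemma lift_exists : exists h : {rmorphism A' -> B},
  dmor_over dA' sA' J' dB sB IB h /\ forall x, h (f x) = h0 x.
Proof.
have [H [HF H0]] := lift_rmorph.
exists H; split => //; split=> [y | y /(lift_ideal HF H0) // | r].
- exact: lift_delta HF y.
- by rewrite -f_struct HF h0_struct.
Qed.

End Lift.

Lemma envelope_of_A (D : comPzRingType) (dD : D -> D) (sD : {rmorphism R -> D})
  (g : {rmorphism A -> D}) : is_envelope p dR I dA sA J dD sD g ->
  exists g' : {rmorphism A' -> D},
    is_envelope p dR I dA' sA' J' dD sD g' /\ forall x, g' (f x) = g x.
Proof.
case=> hD hgd univ; have [g' [hg'd hg'f]] := lift_exists hD hgd.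
exists g'; split => //; split => // B dB sB hB h hh.
have [[k [hk hkf]] huniq] := univ B dB sB hB _ (dmor_comp hf hh).
split=> [| k1 k2 hk1 e1 hk2 e2].
- exists k; split => //; apply: (lift_uniq_dmor hB hh (dmor_comp hg'd hk)) => x /=.
  by rewrite hg'f -hkf.
- by apply: huniq => // x /=; rewrite -hg'f.
Qed.

Lemma envelope_of_A' (D : comPzRingType) (dD : D -> D) (sD : {rmorphism R -> D})
  (g' : {rmorphism A' -> D}) : is_envelope p dR I dA' sA' J' dD sD g' ->
  is_envelope p dR I dA sA J dD sD (g' \o f)%FUN.
Proof.
case=> hD hgd univ; split => //; first exact: dmor_comp hf hgd.
move=> B dB sB hB h hh; have [h' [hh' hh'f]] := lift_exists hB hh.
have [[k [hk hkf]] huniq] := univ B dB sB hB h' hh'.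
split=> [| k1 k2 hk1 e1 hk2 e2]; first by exists k; split => // x /=; rewrite -hh'f hkf.
apply: (huniq k1 k2 hk1 _ hk2) => y.
- by apply: (lift_uniq_dmor hB hh' (dmor_comp hgd hk1)) => x /=; rewrite hh'f e1.
- by apply: (lift_uniq_dmor hB hh' (dmor_comp hgd hk2)) => x /=; rewrite hh'f e2.
Qed.

Lemma has_envelope_transfer :
  has_envelope p dR I dA sA J <-> has_envelope p dR I dA' sA' J'.
Proof.
split=> [[D [dD [sD [g /envelope_of_A [g' [hg' _]]]]]] | [D [dD [sD [g' /envelope_of_A' hg]]]]].
- by exists D, dD, sD, g'.
- by exists D, dD, sD, (g' \o f)%FUN.
Qed.

Lemma envelope_transfer_iso (D : comPzRingType) (dD : D -> D) (sD : {rmorphism R -> D})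
  (g : {rmorphism A -> D}) (D' : comPzRingType) (dD' : D' -> D')
  (sD' : {rmorphism R -> D'}) (g' : {rmorphism A' -> D'}) :
  is_envelope p dR I dA sA J dD sD g -> is_envelope p dR I dA' sA' J' dD' sD' g' ->
  forall k : {rmorphism D -> D'},
    dmor_over dD sD (ext_ideal sD I) dD' sD' (ext_ideal sD' I) k ->
    (forall x, k (g x) = g' (f x)) ->
    exists k' : {rmorphism D' -> D},
      [/\ dmor_over dD' sD' (ext_ideal sD' I) dD sD (ext_ideal sD I) k',
          (forall y, k (k' y) = y) & (forall y, k' (k y) = y)].
Proof.
move=> hg hg' k hk hkg; have [g'' [[_ hgd'' _] hg''f]] := envelope_of_A hg.
case: hg => hD hgd univ; case: hg' => hD' hgd' univ'.
have [[k' [hk' hk'g]] _] := univ' D dD sD hD g'' hgd''.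
exists k'; split => // y.
- have [_ hu] := univ' D' dD' sD' hD' g' hgd'.
  apply: (hu (k \o k')%FUN idfun (dmor_comp hk' hk) _ (dmor_id _ _ _)) => // z /=.
  rewrite -hk'g; apply: (lift_uniq_dmor hD' hgd' (dmor_comp hgd'' hk)) => x /=.
  by rewrite hg''f hkg.
- have [_ hu] := univ D dD sD hD g hgd.
  apply: (hu (k' \o k)%FUN idfun (dmor_comp hk hk') _ (dmor_id _ _ _)) => // z /=.
  by rewrite hkg -hk'g hg''f.
Qed.

End Transfer.

Theorem proposition4p11 (p : nat) (hp : prime p)
    (R : comPzRingType) (dR : R -> R) (I : R -> Prop)
    (hRI : is_bounded_prism p dR I)
    (A : comPzRingType) (dA : A -> A) (sA : {rmorphism R -> A}) (J : A -> Prop)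
    (A' : comPzRingType) (dA' : A' -> A') (sA' : {rmorphism R -> A'}) (J' : A' -> Prop)
    (hA : dpair_over p dR I dA sA J) (hA' : dpair_over p dR I dA' sA' J')
    (f : {rmorphism A -> A'}) (hf : dmor_over dA sA J dA' sA' J' f)
    (hetale : forall n : nat, (0 < n)%N ->
       etale_mod f (ext_ideal sA (idpow (ideal_add (pideal p R) I) n))
                   (ext_ideal sA' (idpow (ideal_add (pideal p R) I) n)))
    (hinj : forall x, J' (f x) -> J x)
    (hsurj : forall y, exists x, J' (y - f x)) :
  (has_envelope p dR I dA sA J <-> has_envelope p dR I dA' sA' J') /\
  (forall (D : comPzRingType) (dD : D -> D) (sD : {rmorphism R -> D}) (g : {rmorphism A -> D})
          (D' : comPzRingType) (dD' : D' -> D') (sD' : {rmorphism R -> D'})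
          (g' : {rmorphism A' -> D'}),
     is_envelope p dR I dA sA J dD sD g ->
     is_envelope p dR I dA' sA' J' dD' sD' g' ->
     forall k : {rmorphism D -> D'},
       dmor_over dD sD (ext_ideal sD I) dD' sD' (ext_ideal sD' I) k ->
       (forall x, k (g x) = g' (f x)) ->
       exists k' : {rmorphism D' -> D},
         [/\ dmor_over dD' sD' (ext_ideal sD' I) dD sD (ext_ideal sD I) k',
             (forall y, k (k' y) = y) & (forall y, k' (k y) = y)]).
Proof.
split; first exact: (has_envelope_transfer hp hA' hf hetale hinj hsurj).
exact: (envelope_transfer_iso hp hA' hf hetale hinj hsurj).
Qed.
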